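(* Let $\mathsf V$ be a class of monotone views and let $\mathcal D$ be a probabilistic database such that there exist two facts $f_1,f_2$, each of positive marginal probability in $\mathcal D$, that are mutually exclusive, i.e. $\Pr_{D\sim\mathcal D}(f_1\in D\text{ and }f_2\in D)=0$. Then $\mathcal D\notin\mathsf V(\mathsf{TI})$.
   Context: Fix a countably infinite universe $U$. Facts are $R(u_1,\dots,u_{\mathrm{ar}(R)})$ with $R$ from a finite schema and $u_i\in U$; instances are finite sets of facts. A probabilistic database (PDB) is a discrete probability space $(\mathbb D,P)$ with $\mathbb D$ a nonempty countable set of instances; the marginal probability of a fact $f$ is $\Pr_{D\sim\mathcal D}(f\in D)$. A PDB $\mathcal I$ is tuple-independent if for all pairwise distinct facts $f_1,\dots,f_k$, $\Pr(f_1\in I,\dots,f_k\in I)=\prod_i\Pr(f_i\in I)$; $\mathsf{TI}$ is the class of these. A view is a function $V$ from instances of an input schema to instances of an output schema; it is monotone if $D\subseteq D'$ implies $V(D)\subseteq V(D')$. The image of a PDB $(\mathbb D,P)$ under $V$ is the PDB on $V(\mathbb D)$ with $P'(\{D'\})=P(\{D:V(D)=D'\})$; $\mathsf V(\mathsf{TI})$ is the class of images of TI-PDBs under views from $\mathsf V$. *)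

From HB Require Import structures.
From mathcomp Require Import all_boot all_order all_algebra.
From mathcomp Require Import finmap.
From mathcomp Require Import all_classical all_reals all_analysis.
Set Implicit Arguments. Unset Strict Implicit. Unset Printing Implicit Defensive.
Import Order.TTheory GRing.Theory Num.Theory.
Local Open Scope classical_set_scope.
Local Open Scope ring_scope.

Record schema := Schema { rel : finType ; arity : rel -> nat }.

Definition fact (U : countType) (S : schema) : Type :=
  {r : rel S & (arity r).-tuple U}.
HB.instance Definition _ U S := Choice.on (fact U S).

Definition inst (U : countType) (S : schema) : Type := {fset fact U S}.
HB.instance Definition _ U S := Choice.on (inst U S).

(* A PDB: a sample space (set of instances) with point masses P({D}). *)
Record pdb (R : realType) (U : countType) (S : schema) := PDB {
  pdb_dom : set (inst U S);
  pdb_mass : inst U S -> R }.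

Definition probE R U S (D : pdb R U S) (A : set (inst U S)) : \bar R :=
  \esum_(x in pdb_dom D `&` A) (pdb_mass D x)%:E.
Definition prob R U S (D : pdb R U S) (A : set (inst U S)) : R :=
  fine (probE D A).

Definition is_pdb R U S (D : pdb R U S) : Prop :=
  [/\ pdb_dom D !=set0, countable (pdb_dom D),
      (forall x, pdb_dom D x -> 0 <= pdb_mass D x) &
      probE D setT = 1%E].

Definition marginal R U S (D : pdb R U S) (f : fact U S) : R :=
  prob D [set x | f \in x].

Definition is_TI R U S (D : pdb R U S) : Prop :=
  forall s : seq (fact U S), uniq s ->
    prob D [set x | all (fun f => f \in x) s] = \prod_(f <- s) marginal D f.

Definition monotone_view U S S' (v : inst U S -> inst U S') : Prop :=
  forall D D' : inst U S, fsubset D D' -> fsubset (v D) (v D').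

Definition image_pdb R U S S' (v : inst U S -> inst U S') (D : pdb R U S)
  : pdb R U S' :=
  PDB (v @` pdb_dom D)
      (fun D' => prob D [set x | v x = D']).

Definition pdb_eq R U S (D1 D2 : pdb R U S) : Prop :=
  pdb_dom D1 = pdb_dom D2 /\
  (forall x, pdb_dom D1 x -> pdb_mass D1 x = pdb_mass D2 x).

Definition view_class U (S' : schema) : Type :=
  forall S : schema, set (inst U S -> inst U S').

Definition in_V_TI R U S' (VV : view_class U S') (D : pdb R U S') : Prop :=
  exists (S : schema) (v : inst U S -> inst U S'), VV S v /\
    exists I : pdb R U S, [/\ is_pdb I, is_TI I & pdb_eq (image_pdb v I) D].

From HB Require Import structures.
From mathcomp Require Import all_boot all_order all_algebra.
From mathcomp Require Import finmap.
From mathcomp Require Import all_classical all_reals all_analysis.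
Import Order.TTheory GRing.Theory Num.Theory.
Local Open Scope classical_set_scope.
Local Open Scope ring_scope.

(* Suppose D = v(I) with I tuple-independent and v monotone. Each f_i lies in
   v(J_i) for some world J_i of I with positive mass. Every fact of J_1 ∪ J_2
   then has positive marginal in I, so by independence some world K of
   positive mass contains J_1 ∪ J_2. By monotonicity v(K) contains both f_1
   and f_2, and v(K) is a world of D of positive mass: f_1 and f_2 are not
   mutually exclusive. *)

Set Implicit Arguments.

Lemma le_esum_subset (R : realType) (T : choiceType) (A B : set T)
    (a : T -> \bar R) :
  A `<=` B -> (forall x, B x -> (0 <= a x)%E) ->
  (\esum_(i in A) a i <= \esum_(i in B) a i)%E.
Proof.
move=> AB a0; rewrite (esum_mkcond A) (esum_mkcond B); apply: le_esum => i _.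
case: ifPn => iA; first by rewrite ifT //; apply/mem_set/AB/set_mem.
by case: ifPn => // /set_mem /a0.
Qed.

Section WellFormedPDB.
Variables (R : realType) (U : countType) (S : schema) (P : pdb R U S).
Hypothesis HP : is_pdb P.

Lemma probE_fin_num (A : set (inst U S)) : probE P A \is a fin_num.
Proof.
case: HP => _ _ mass_ge0 probT.
have probE_le1 : (probE P A <= 1)%E.
  rewrite -probT; apply: le_esum_subset => [x [] //|x [dx _]].
  by rewrite lee_fin mass_ge0.
rewrite ge0_fin_numE ?(le_lt_trans probE_le1) ?ltey //.
by apply: esum_ge0 => x [dx _]; rewrite lee_fin mass_ge0.
Qed.

Lemma mass_le_prob {A : set (inst U S)} {x} :
  pdb_dom P x -> A x -> pdb_mass P x <= prob P A.
Proof.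
move=> dx Ax; rewrite -lee_fin /prob fineK ?probE_fin_num //.
apply: esum_ge; exists [set x]; last by rewrite fsbig_set1.
by split; [exact: finite_set1 | move=> y ->].
Qed.

Lemma prob_gt0_mass {A : set (inst U S)} : 0 < prob P A ->
  exists x, [/\ pdb_dom P x, A x & 0 < pdb_mass P x].
Proof.
apply: contraPP => /forallNP no_pos_mass.
rewrite /prob /probE esum1 ?lt_irreflexive // => x [dx Ax].
case: HP => _ _ mass_ge0 _.
have := mass_ge0 _ dx; rewrite le_eqVlt => /orP[/eqP <- //|mx_gt0].
by have [] := no_pos_mass x.
Qed.

End WellFormedPDB.

Section ImagePDB.
Variables (R : realType) (U : countType) (S S' : schema).
Variables (v : inst U S -> inst U S') (I : pdb R U S) (D : pdb R U S').
Hypotheses (HI : is_pdb I) (HD : is_pdb D) (HvI : pdb_eq (image_pdb v I) D).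

Lemma image_mass_gt0 {K} : pdb_dom I K -> 0 < pdb_mass I K ->
  pdb_dom D (v K) /\ 0 < pdb_mass D (v K).
Proof.
case: HvI => dom_eq mass_eq dK mK.
have dvK : pdb_dom (image_pdb v I) (v K) by exists K.
split; first by rewrite -dom_eq.
by rewrite -mass_eq //=; apply: lt_le_trans mK _; exact: mass_le_prob.
Qed.

Lemma image_prob_gt0 {A : set (inst U S')} : 0 < prob D A ->
  exists J, [/\ pdb_dom I J, 0 < pdb_mass I J & A (v J)].
Proof.
case: HvI => dom_eq mass_eq /(prob_gt0_mass HD) [D' [dD' AD' mD']].
rewrite -dom_eq in dD'; rewrite -mass_eq //= in mD'.
have [J [dJ vJ mJ]] := prob_gt0_mass HI mD'.
by exists J; split => //; rewrite vJ.
Qed.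

End ImagePDB.

Lemma TI_joint_gt0 (R : realType) (U : countType) (S : schema)
    (I : pdb R U S) {F : {fset fact U S}} :
  is_pdb I -> is_TI I -> (forall f, f \in F -> 0 < marginal I f) ->
  exists K, [/\ pdb_dom I K, 0 < pdb_mass I K & fsubset F K].
Proof.
move=> HI HTI marginal_gt0.
have joint_gt0 : 0 < prob I [set x | all (fun f => f \in x) (enum_fset F)].
  rewrite HTI ?fset_uniq // big_seq.
  by apply: prodr_gt0 => f; apply: marginal_gt0.
have [K [dK /allP FK mK]] := prob_gt0_mass HI joint_gt0.
by exists K; split => //; apply/fsubsetP => f; apply: FK.
Qed.

Unset Implicit Arguments.

Theorem proposition6p5 (R : realType) (U : countType)
  (HU : infinite_set [set: U]) (S' : schema) (VV : view_class U S')
  (Hmono : forall (S : schema) (v : inst U S -> inst U S'),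
      VV S v -> monotone_view v)
  (D : pdb R U S') (HD : is_pdb D) (f1 f2 : fact U S')
  (H1 : 0 < marginal D f1) (H2 : 0 < marginal D f2)
  (Hexcl : prob D [set x | f1 \in x /\ f2 \in x] = 0) :
  ~ in_V_TI VV D.
Proof.
move=> [S [v [Vv [I [HI HTI HvI]]]]].
have [J1 [dJ1 mJ1 f1J1]] := image_prob_gt0 HI HD HvI H1.
have [J2 [dJ2 mJ2 f2J2]] := image_prob_gt0 HI HD HvI H2.
have J12_marginal_gt0 f : f \in (J1 `|` J2)%fset -> 0 < marginal I f.
  rewrite inE => /orP[fJ1|fJ2].
  - exact: lt_le_trans mJ1 (mass_le_prob HI dJ1 fJ1).
  - exact: lt_le_trans mJ2 (mass_le_prob HI dJ2 fJ2).
have [K [dK mK J12K]] := TI_joint_gt0 HI HTI J12_marginal_gt0.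
have vK_sup J : fsubset J (J1 `|` J2)%fset -> fsubset (v J) (v K).
  by move=> JJ12; apply: (Hmono _ _ Vv); apply: fsubset_trans JJ12 J12K.
have f12vK : f1 \in v K /\ f2 \in v K.
  by split; [apply: fsubsetP (vK_sup _ (fsubsetUl _ _)) _ f1J1
            |apply: fsubsetP (vK_sup _ (fsubsetUr _ _)) _ f2J2].
have [dvK mvK] := image_mass_gt0 HI HvI dK mK.
have : 0 < prob D [set x | f1 \in x /\ f2 \in x].
  by apply: lt_le_trans mvK _; apply: mass_le_prob.
by rewrite Hexcl ltxx.
Qed.
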